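(* For a packed word $u$, let $\mathrm{detass}(u)$ (the maximal unpacking of $u$) be the largest parking function $\mathbf a$, for the lexicographic order, such that $\mathrm{tass}(\mathbf a)=u$. In the Hopf algebra $\mathbf{PQSym}$, the elements $\mathbf F_{\mathbf a}$, where $\mathbf a$ runs over the parking functions of the form $\mathrm{detass}(u)$, span a Hopf subalgebra of $\mathbf{PQSym}$, which is isomorphic to $\mathbf{NCQSym}^*$, the graded dual of $\mathbf{NCQSym}$.
   Context: Letters are identified with positive integers. For a word $w$ with distinct letters $b_1<\dots<b_r$, $\mathrm{tass}(w)$ is the image of $w$ under $b_j\mapsto j$; $w$ is packed if $\mathrm{tass}(w)=w$. A parking function of length $n$ is a word over positive integers whose nondecreasing rearrangement $b_1\le\dots\le b_n$ satisfies $b_i\le i$. Parkization: for a word $w$ of length $n$ let $d(w)=\min\{i: |\{j:w_j\le i\}|<i\}$; if $d(w)=n+1$, $\mathrm{park}(w)=w$; otherwise decrease by $1$ every letter $>d(w)$ to get $w'$ and set $\mathrm{park}(w)=\mathrm{park}(w')$. $\mathbf{PQSym}$ (over a field $\mathbb K$ of characteristic $0$) has basis $(\mathbf F_{\mathbf a})$ indexed by parking functions, product $\mathbf F_{\mathbf a'}\mathbf F_{\mathbf a''}=\sum_{\mathbf a\in\mathbf a'\sqcup\!\sqcup(\mathbf a''[n'])}\mathbf F_{\mathbf a}$ ($n'$ the length of $\mathbf a'$, $\mathbf a''[n']$ obtained by adding $n'$ to each letter, $\sqcup\!\sqcup$ the shuffle), and coproduct $\Delta\mathbf F_{\mathbf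 a}=\sum_{\mathbf a=uv}\mathbf F_{\mathrm{park}(u)}\otimes\mathbf F_{\mathrm{park}(v)}$. $\mathbf{NCQSym}$ is the Hopf algebra with basis $\mathbf M_u=\sum_{\mathrm{tass}(w)=u}w\in\mathbb K\langle a_1,a_2,\dots\rangle$ ($u$ packed), product induced by $\mathbb K\langle A\rangle$, and coproduct $\Delta\mathbf M_u=\sum_{k=0}^{m}\mathbf M_{u_{\le k}}\otimes\mathbf M_{\mathrm{tass}(u_{>k})}$, $m$ the greatest letter of $u$, $u_{\le k}$ (resp. $u_{>k}$) the subword of letters $\le k$ (resp. $>k$). *)

From HB Require Import structures.
From mathcomp Require Import all_boot all_order all_algebra.
From mathcomp Require Import finmap.
From mathcomp.multinomials Require Import monalg.
Set Implicit Arguments. Unset Strict Implicit. Unset Printing Implicit Defensive.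
Import GRing.Theory.
Local Open Scope ring_scope.

Definition tass (w : seq nat) : seq nat :=
  map (fun x => (index x (sort leq (undup w))).+1) w.
Definition packed (w : seq nat) : bool := tass w == w.

Definition parking (w : seq nat) : bool :=
  let b := sort leq w in
  all (fun i => (0 < nth 0%N b i <= i.+1)%N) (iota 0 (size w)).

(* d(w) = min { i >= 1 : #{j : w_j <= i} < i }  (always <= n+1) *)
Definition dpos (w : seq nat) : nat :=
  head (size w).+1 [seq i <- iota 1 (size w).+1 | (count (fun x => x <= i) w < i)%N].

Fixpoint park_fuel (k : nat) (w : seq nat) : seq nat :=
  if k is k'.+1 then
    let d := dpos w in
    if d == (size w).+1 then w
    else park_fuel k' (map (fun x => if (d < x)%N then x.-1 else x) w)
  else w.
(* each non-terminal step strictly decreases the sum of letters *)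
Definition park (w : seq nat) : seq nat := park_fuel (sumn w).+1 w.

Fixpoint lexle (s t : seq nat) : bool :=
  match s, t with
  | [::], _ => true
  | _ :: _, [::] => false
  | x :: s', y :: t' => (x < y)%N || ((x == y) && lexle s' t')
  end.

(* a = detass(u) for some packed u: a is the lex-largest parking function
   with tass a = u (here u = tass a) *)
Definition is_detass (a : seq nat) : Prop :=
  parking a /\ forall b, parking b -> tass b = tass a -> lexle b a.

(* shuffle product of words, with multiplicities *)
Fixpoint shuffle (s : seq nat) : seq nat -> seq (seq nat) :=
  match s with
  | [::] => fun t => [:: t]
  | x :: s' =>
    fix shuf_t (t : seq nat) : seq (seq nat) :=
      match t with
      | [::] => [:: x :: s']
      | y :: t' => map (cons x) (shuffle s' t) ++ map (cons y) (shuf_t t')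
      end
  end.

Fixpoint allwords (n m : nat) : seq (seq nat) :=
  if n is n'.+1 then
    flatten [seq [seq i :: w | w <- allwords n' m] | i <- iota 1 m]
  else [:: [::]].
Definition packed_words (n : nat) : seq (seq nat) := filter packed (allwords n n).

Section FreeModules.
Variable K : fieldType.

(* free K-module on a basis indexed by I : {malg K[I]}; <<i>> is the basis
   vector indexed by i, g@_i the coefficient. The tensor product of free
   modules on I and J is the free module on I * J. *)

Definition in_span (I : choiceType) (P : I -> Prop) (g : {malg K[I]}) : Prop :=
  exists s : seq (K * I), (forall p, p \in s -> P p.2) /\
                          g = \sum_(p <- s) p.1 *: << p.2 >>.

Definition lin (I J : choiceType) (f : I -> {malg K[J]}) (g : {malg K[I]})
  : {malg K[J]} := \sum_(x <- msupp g) g@_x *: f x.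
Definition bilin (I J : choiceType) (f : I -> I -> {malg K[J]})
  (g h : {malg K[I]}) : {malg K[J]} :=
  \sum_(x <- msupp g) \sum_(y <- msupp h) (g@_x * h@_y) *: f x y.

Definition tens (I : choiceType) (x y : {malg K[I]}) : {malg K[(I * I)%type]} :=
  bilin (fun a b => << (a, b) >>) x y.
Definition tmap (I J : choiceType) (phi : {malg K[I]} -> {malg K[J]})
  (t : {malg K[(I * I)%type]}) : {malg K[(J * J)%type]} :=
  \sum_(p <- msupp t) t@_p *: tens (phi << p.1 >>) (phi << p.2 >>).

(* ---------------- PQSym (basis F_a = << a >>) ---------------- *)
Definition mulP : {malg K[seq nat]} -> {malg K[seq nat]} -> {malg K[seq nat]} :=
  bilin (fun a b => \sum_(c <- shuffle a (map (addn (size a)) b)) << c >>).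
Definition unitP : {malg K[seq nat]} := << [::] >>.
Definition DeltaP : {malg K[seq nat]} -> {malg K[(seq nat * seq nat)%type]} :=
  lin (fun a => \sum_(i < (size a).+1) << (park (take i a), park (drop i a)) >>).
Definition epsP (g : {malg K[seq nat]}) : K := g@_[::].

(* antipode of the graded connected bialgebra PQSym, by the recursion
   m (S (x) id) Delta = unit o counit:
   S(F_a) = - sum_{i < n} S(F_park(a_1..a_i)) F_park(a_{i+1}..a_n)  (n >= 1) *)
Fixpoint antipP_fuel (k : nat) (a : seq nat) : {malg K[seq nat]} :=
  if k is k'.+1 then
    if a is [::] then << [::] >>
    else - \sum_(i < size a)
             mulP (antipP_fuel k' (park (take i a))) << park (drop i a) >>
  else 0.
Definition antipP : {malg K[seq nat]} -> {malg K[seq nat]} :=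
  lin (fun a => antipP_fuel (size a).+1 a).

(* noncommutative series over the alphabet a_1, a_2, ... (words = seq nat) *)
Definition series := seq nat -> K.
Definition sprod (f g : series) : series :=
  fun w => \sum_(i < (size w).+1) f (take i w) * g (drop i w).
Definition Mser (u : seq nat) : series := fun w => (tass w == u)%:R.
(* coefficient of M_w in M_u M_v (product induced by K<A>); for an element
   of NCQSym the coefficient of M_w (w packed) is its coefficient on the word w *)
Definition cM (u v w : seq nat) : K := sprod (Mser u) (Mser v) w.
Definition DeltaM (u : seq nat) : {malg K[(seq nat * seq nat)%type]} :=
  \sum_(k < (\max_(x <- u) x).+1)
     << ([seq x <- u | (x <= k)%N], tass [seq x <- u | (k < x)%N]) >>.
Definition dM (u v w : seq nat) : K := (DeltaM w)@_(u, v).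

(* ---------------- NCQSym^* (graded dual, dual basis N_u = << u >>) ------ *)
(* <N_u N_v, M_w> = <N_u (x) N_v, Delta M_w>,
   <Delta N_w, M_u (x) M_v> = <N_w, M_u M_v> *)
Definition mulN : {malg K[seq nat]} -> {malg K[seq nat]} -> {malg K[seq nat]} :=
  bilin (fun u v => \sum_(w <- packed_words (size u + size v)) dM u v w *: << w >>).
Definition unitN : {malg K[seq nat]} := << [::] >>.
Definition DeltaN : {malg K[seq nat]} -> {malg K[(seq nat * seq nat)%type]} :=
  lin (fun w => \sum_(i < (size w).+1) \sum_(u <- packed_words i)
                  \sum_(v <- packed_words (size w - i)) cM u v w *: << (u, v) >>).
Definition epsN (g : {malg K[seq nat]}) : K := g@_[::].

End FreeModules.

From HB Require Import structures.
From mathcomp Require Import all_boot all_order all_algebra.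
From mathcomp Require Import finmap.
From mathcomp.multinomials Require Import monalg.
From mathcomp Require Import zify.
Import GRing.Theory.
Set Implicit Arguments. Unset Strict Implicit. Unset Printing Implicit Defensive.

(* A parking function is of the form detass(u) exactly when each of its letters
   is one more than the number of strictly smaller letters it contains, i.e. when
   it is fixed by "competition ranking" [unpack]: [unpack w] depends only on
   [tass w], is a parking function, and dominates letterwise every parking
   function with the same [tass].  This property is stable under the shifted
   shuffle (the counts of smaller letters just add up) and under parkization of
   factors: positivity and the bound #{y in [k, x)} <= x - k pass to factors,
   survive each parkization step, and force the property once parkization stops.
   On the span of such words, F_a |-> N_(tass a) is injective since [tass] is;
   it sends shifted shuffles to shifted shuffles of packed words, which is the
   product of NCQSym^*, and, parkization preserving [tass], it is a coalgebra
   map on the whole of PQSym. *)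

(** * Ranks of letters *)

Lemma count_add_pred (T : Type) (P Q1 Q2 : pred T) (s : seq T) :
  (forall y, P y = Q1 y + Q2 y :> nat) -> count P s = count Q1 s + count Q2 s.
Proof. by move=> PQ; elim: s => //= y s ->; rewrite PQ; lia. Qed.

Lemma count_le_add_pred (T : Type) (P Q1 Q2 : pred T) (s : seq T) :
  (forall y, P y <= Q1 y + Q2 y) -> count P s <= count Q1 s + count Q2 s.
Proof. by move=> PQ; elim: s => //= y s IHs; have := PQ y; lia. Qed.

Lemma mono_ltn_inj_in (h : nat -> nat) (s : seq nat) :
  {in s &, {mono h : x y / x < y}} -> {in s &, injective h}.
Proof.
move=> hmono x y xs ys hxy; case: (ltngtP x y) => // xy.
  by move: (hmono x y xs ys); rewrite xy hxy ltnn.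
by move: (hmono y x ys xs); rewrite xy hxy ltnn.
Qed.

Definition below (x : nat) (s : seq nat) : nat := count (fun y => y < x) s.

Lemma below_mono s : {in s &, {mono below^~ s : x y / x < y}}.
Proof.
move=> x y xs ys /=; case: (ltnP x y) => xy.
  rewrite /below (@count_add_pred _ (fun z => z < y) (fun z => z < x) (fun z => x <= z < y)).
    by rewrite -[X in X < _]addn0 ltn_add2l -has_count; apply/hasP; exists x; rewrite ?leqnn.
  by move=> z /=; case: (ltnP z x); case: (ltnP z y) => //=; lia.
by apply/negbTE; rewrite -leqNgt; apply: sub_count => z /=; lia.
Qed.

Lemma below_lt_size x s : x \in s -> below x s < size s.
Proof.
move=> xs; rewrite /below -(count_predC (fun y => y < x) s) -[X in X < _]addn0 ltn_add2l.
by rewrite -has_count; apply/hasP; exists x; rewrite //= ltnn.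
Qed.

Lemma below_sorted_head y s : sorted leq (y :: s) -> below y (y :: s) = 0.
Proof.
move=> /(order_path_min leq_trans) /allP ys; rewrite /below /= ltnn.
by apply/eqP; rewrite -leqn0 leqNgt -has_count; apply/hasP => -[z /ys /= yz]; lia.
Qed.

Lemma index_sorted x s : sorted leq s -> x \in s -> index x s = below x s.
Proof.
elim: s => // y s IHs s_sorted; rewrite inE.
case: (eqVneq y x) => [<- _|yx /= xs]; first by rewrite below_sorted_head //= eqxx.
have yltx : y < x.
  by rewrite ltn_neqAle yx (allP (order_path_min leq_trans s_sorted)).
by rewrite /= (negbTE yx) /below /= yltx IHs // (path_sorted s_sorted).
Qed.

Lemma below_undup_map (h : nat -> nat) w x : {in x :: w &, {mono h : y z / y < z}} ->
  below (h x) (undup (map h w)) = below x (undup w).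
Proof.
move=> hmono.
have hinj : {in undup w &, injective h}.
  by apply: sub_in2 (mono_ltn_inj_in hmono) => y; rewrite mem_undup inE orbC => ->.
have hw_perm : perm_eq (undup (map h w)) (map h (undup w)).
  apply: uniq_perm; rewrite ?undup_uniq ?map_inj_in_uniq ?undup_uniq // => y.
  by rewrite mem_undup (eq_mem_map h (mem_undup w)).
rewrite /below (permP hw_perm) count_map; apply: eq_in_count => y.
by rewrite mem_undup => yw /=; rewrite hmono ?inE ?yw ?eqxx ?orbT.
Qed.

(* [tass] replaces each letter by its dense rank, [unpack] by its competition
   rank; by [detassP], [max_unpacked a] means [a = detass (tass a)]. *)
Definition dense_rank (w : seq nat) (x : nat) : nat := (below x (undup w)).+1.
Definition comp_rank (w : seq nat) (x : nat) : nat := (below x w).+1.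
Definition unpack (w : seq nat) : seq nat := map (comp_rank w) w.
Definition max_unpacked (w : seq nat) : Prop := forall x, x \in w -> comp_rank w x = x.

Lemma tassE w : tass w = map (dense_rank w) w.
Proof.
apply/eq_in_map => x xw; rewrite /dense_rank.
rewrite index_sorted ?sort_sorted ?mem_sort ?mem_undup //.
by rewrite /below (permP (permEl (perm_sort leq (undup w)))).
Qed.

Lemma dense_rank_mono w : {in w &, {mono dense_rank w : x y / x < y}}.
Proof. by move=> x y xw yw; rewrite ltnS below_mono ?mem_undup. Qed.

Lemma comp_rank_mono w : {in w &, {mono comp_rank w : x y / x < y}}.
Proof. by move=> x y xw yw; rewrite ltnS below_mono. Qed.

Definition order_iso (s t : seq nat) : Prop :=
  exists2 h, t = map h s & {in s &, {mono h : x y / x < y}}.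

Lemma order_iso_refl s : order_iso s s.
Proof. by exists id; rewrite ?map_id. Qed.

Lemma order_iso_trans s t u : order_iso s t -> order_iso t u -> order_iso s u.
Proof.
move=> [h -> hmono] [k -> kmono]; exists (k \o h); first by rewrite map_comp.
by move=> x y xs ys /=; rewrite kmono ?hmono ?map_f.
Qed.

Lemma order_iso_take i s t : order_iso s t -> order_iso (take i s) (take i t).
Proof.
move=> [h -> hmono]; exists h; first by rewrite map_take.
by apply: sub_in2 hmono => x /mem_take.
Qed.

Lemma order_iso_drop i s t : order_iso s t -> order_iso (drop i s) (drop i t).
Proof.
move=> [h -> hmono]; exists h; first by rewrite map_drop.
by apply: sub_in2 hmono => x /mem_drop.
Qed.

Lemma order_iso_addn m s : order_iso s (map (addn m) s).
Proof. by exists (addn m) => // x y _ _; rewrite ltn_add2l. Qed.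

Lemma order_iso_tass s t : order_iso s t -> tass t = tass s.
Proof.
move=> [h -> hmono]; rewrite !tassE -map_comp; apply/eq_in_map => x xs /=.
rewrite /dense_rank below_undup_map //.
by apply: sub_in2 hmono => y; rewrite inE => /predU1P[->|].
Qed.

Lemma order_iso_unpack s t : order_iso s t -> unpack t = unpack s.
Proof.
move=> [h -> hmono]; rewrite /unpack -map_comp; apply/eq_in_map => x xs /=.
by rewrite /comp_rank /below count_map; congr S; apply: eq_in_count => y ys /=; apply: hmono.
Qed.

Lemma order_iso_tass_self w : order_iso w (tass w).
Proof. by exists (dense_rank w); [rewrite tassE | apply: dense_rank_mono]. Qed.

Lemma order_iso_unpack_self w : order_iso w (unpack w).
Proof. by exists (comp_rank w) => //; apply: comp_rank_mono. Qed.

Lemma tass_idem w : tass (tass w) = tass w.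
Proof. exact/order_iso_tass/order_iso_tass_self. Qed.

Lemma packed_tass w : packed (tass w).
Proof. by rewrite /packed tass_idem. Qed.

Lemma unpack_tass w : unpack (tass w) = unpack w.
Proof. exact/order_iso_unpack/order_iso_tass_self. Qed.

Lemma max_unpackedE w : max_unpacked w <-> unpack w = w.
Proof.
split=> [wmax | wfix x xw]; first by rewrite -[RHS]map_id; apply/eq_in_map.
by move: wfix; rewrite -[X in _ = X]map_id => /eq_in_map; apply.
Qed.

Lemma max_unpacked_unpack w : max_unpacked (unpack w).
Proof. by apply/max_unpackedE/order_iso_unpack/order_iso_unpack_self. Qed.

Lemma max_unpacked_tass_inj a b :
  max_unpacked a -> max_unpacked b -> tass a = tass b -> a = b.
Proof.
move=> /max_unpackedE amax /max_unpackedE bmax ab.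
by rewrite -amax -bmax -unpack_tass ab unpack_tass.
Qed.

(** * Maximal unpackings *)

Lemma parking_le_comp_rank b x : parking b -> x \in b -> x <= comp_rank b x.
Proof.
move=> /allP b_parking xb; set s := sort leq b.
have xs : x \in s by rewrite mem_sort.
have s_sorted : sorted leq s by apply: sort_sorted; exact: leq_total.
have -> : comp_rank b x = (index x s).+1.
  by rewrite index_sorted // /comp_rank /below (permP (permEl (perm_sort leq b))).
have := b_parking (index x s); rewrite mem_iota -(size_sort leq b) index_mem nth_index //.
by move=> /(_ xs) /andP[].
Qed.

Lemma max_unpacked_parking w : max_unpacked w -> parking w.
Proof.
move=> wmax; apply/allP => i; rewrite mem_iota add0n => /andP[_ iw].
set s := sort leq w; have s_sorted : sorted leq s by apply: sort_sorted; exact: leq_total.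
have i_lt : i < size s by rewrite size_sort.
have nth_w : nth 0 s i \in w by rewrite -(mem_sort leq) mem_nth.
have := index_nth 0 i_lt; rewrite index_sorted ?mem_nth // /below.
rewrite (permP (permEl (perm_sort leq w))) -/(below _ w) -ltnS -/(comp_rank w _) wmax //.
by rewrite -[X in 0 < X](wmax _ nth_w) => ->.
Qed.

Lemma lexle_map_ge (g : nat -> nat) s : {in s, forall x, x <= g x} -> lexle s (map g s).
Proof.
elim: s => //= x s IHs gs; rewrite IHs ?andbT => [|y ys]; last by rewrite gs ?inE ?ys ?orbT.
by move: (gs x (mem_head x s)); rewrite leq_eqVlt => /orP[/eqP <-|->]; rewrite ?eqxx ?orbT.
Qed.

Lemma lexle_map_ge_eq (g : nat -> nat) s :
  {in s, forall x, x <= g x} -> lexle (map g s) s -> map g s = s.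
Proof.
elim: s => //= x s IHs gs; rewrite ltnNge gs ?mem_head //= => /andP[/eqP -> gs_le].
by rewrite IHs // => y ys; rewrite gs ?inE ?ys ?orbT.
Qed.

Lemma detassP a : is_detass a <-> max_unpacked a.
Proof.
split=> [[a_parking a_max] | amax].
  apply/max_unpackedE/lexle_map_ge_eq => [x|]; first exact: parking_le_comp_rank.
  apply: a_max; first exact/max_unpacked_parking/max_unpacked_unpack.
  exact/order_iso_tass/order_iso_unpack_self.
split=> [|b b_parking ab]; first exact: max_unpacked_parking.
have <- : unpack b = a by rewrite -unpack_tass ab unpack_tass; apply/max_unpackedE.
by apply: lexle_map_ge => x; apply: parking_le_comp_rank.
Qed.

(** * Parkization *)

Lemma head_filter_iotaP (P : pred nat) m k x0 :
  (exists2 i, m <= i < m + k & P i) ->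
  let h := head x0 (filter P (iota m k)) in
  [/\ m <= h < m + k, P h & forall i, m <= i < h -> ~~ P i].
Proof.
elim: k m => [|k IHk] m [i ir Pi]; first lia.
rewrite /=; case Pm: (P m) => /=; first by split=> // [|j]; lia.
have ir' : m.+1 <= i < m.+1 + k.
  by case: (eqVneq i m) => [im|/eqP]; [rewrite im Pm in Pi | lia].
have [h_range Ph h_min] := IHk m.+1 (ex_intro2 _ _ i ir' Pi).
split=> // [|j jr]; first lia.
by case: (eqVneq j m) => [->|/eqP jm]; [rewrite Pm | apply: h_min; lia].
Qed.

Lemma dposP w : let d := dpos w in
  [/\ 0 < d <= (size w).+1, count (fun x => x <= d) w < d &
      forall i, 0 < i < d -> i <= count (fun x => x <= i) w].
Proof.
have [|d_range dP d_min] :=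
  @head_filter_iotaP (fun i => count (fun x => x <= i) w < i) 1 (size w).+1 (size w).+1.
  by exists (size w).+1; rewrite /= ?ltnS ?count_size //; lia.
by split=> // i /d_min; rewrite -leqNgt.
Qed.

Lemma dpos_notin w : dpos w \notin w.
Proof.
have [d_range d_count d_min] := dposP w; set d := dpos w in d_range d_count d_min *.
have count_d : count (fun x => x <= d) w = count (fun x => x <= d.-1) w + count (pred1 d) w.
  by apply: count_add_pred => y /=; case: (eqVneq y d) => [->|/eqP]; case: leqP; lia.
have : d.-1 <= count (fun x => x <= d.-1) w.
  by case: (eqVneq d 1) => [->|/eqP d1] //; apply: d_min; lia.
by rewrite -has_pred1 has_count; lia.
Qed.

Definition park_step (w : seq nat) : seq nat :=
  map (fun x => if dpos w < x then x.-1 else x) w.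

Lemma park_fuelS k w : park_fuel k.+1 w =
  if dpos w == (size w).+1 then w else park_fuel k (park_step w).
Proof. by []. Qed.

Lemma sumn_map_lt (f : nat -> nat) w x :
  (forall y, f y <= y) -> x \in w -> f x < x -> sumn (map f w) < sumn w.
Proof.
move=> f_le xw fx; have sumn_le v : sumn (map f v) <= sumn v.
  by elim: v => //= y v IHv; have := f_le y; lia.
elim: w xw => //= y w IHw; rewrite inE => /predU1P[<-|/IHw]; have := f_le y.
  by have := sumn_le w; lia.
lia.
Qed.

Lemma sumn_park_step w : dpos w != (size w).+1 -> sumn (park_step w) < sumn w.
Proof.
move=> d_lt; have [d_range d_count _] := dposP w.
have [x xw dx] : exists2 x, x \in w & dpos w < x.
  apply/hasP; rewrite has_count (eq_count (a2 := predC (fun x => x <= dpos w))) => [|y /=].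
    by have := count_predC (fun x => x <= dpos w) w; move: d_lt => /eqP; lia.
  by rewrite -ltnNge.
by apply: (sumn_map_lt _ xw) => [y|]; case: ifP; lia.
Qed.

Lemma park_invariant (Q : seq nat -> Prop) :
  (forall w, Q w -> dpos w != (size w).+1 -> Q (park_step w)) ->
  forall w, Q w -> Q (park w) /\ dpos (park w) = (size (park w)).+1.
Proof.
move=> Qstep w Qw.
suff park_fuelP k v : sumn v < k -> Q v ->
    Q (park_fuel k v) /\ dpos (park_fuel k v) = (size (park_fuel k v)).+1.
  exact: park_fuelP.
elim: k v => [//|k IHk] v lt_k Qv; rewrite park_fuelS; case: eqP => [//|/eqP d_lt].
by apply: IHk; [have := sumn_park_step d_lt; lia | exact: Qstep].
Qed.

Lemma order_iso_park_step w : order_iso w (park_step w).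
Proof.
exists (fun x => if dpos w < x then x.-1 else x) => // x y xw yw.
have := dpos_notin w => dw.
have /eqP dx : x != dpos w by apply: contraNneq dw => <-.
have /eqP dy : y != dpos w by apply: contraNneq dw => <-.
by case: (ltnP (dpos w) x); case: (ltnP (dpos w) y); lia.
Qed.

Lemma tass_park w : tass (park w) = tass w.
Proof.
apply: order_iso_tass; have [] // := @park_invariant (order_iso w) _ w (order_iso_refl w).
by move=> v wv _; apply: order_iso_trans wv (order_iso_park_step v).
Qed.

Definition sparse (w : seq nat) : Prop :=
  forall x, x \in w -> forall k, count (fun y => k <= y < x) w <= x - k.

Lemma nonzero_park_step w : 0 \notin w -> 0 \notin park_step w.
Proof.
move=> w0; have [d_range _ _] := dposP w; apply/mapP => -[x xw].
by case: ifP => [|_ x0]; [lia | by rewrite x0 xw in w0].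
Qed.

Lemma sparse_park_step w : sparse w -> sparse (park_step w).
Proof.
move=> wsparse; have [_ d_count d_min] := dposP w; set d := dpos w in d_count d_min *.
move=> _ /mapP [x xw ->] k; rewrite count_map /preim /=.
have /eqP xd : x != d by apply: contraNneq (dpos_notin w : d \notin w) => <-.
case: (ltnP d x) => dx; last first.
  by apply: leq_trans (wsparse x xw k); apply: sub_count => y /=; case: ltnP; lia.
case: (leqP k d) => kd; last first.
  apply: leq_trans (sub_count (a2 := fun y => k.+1 <= y < x) _ _) _.
    by move=> y /=; case: ltnP; lia.
  by have := wsparse x xw k.+1; lia.
(* The letters of [w] in [[k, d]] number at most [(d - 1) - (k - 1)], by the
   choice of [d]; those in [(d, x)] at most [x - d - 1], by sparsity. *)
apply: leq_trans (count_le_add_pred (Q1 := fun y => k <= y <= d) (Q2 := fun y => d < y < x) _ _) _.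
  by move=> y /=; case: ltnP; lia.
have split_d : count (fun y => y <= d) w = below k w + count (fun y => k <= y <= d) w.
  by apply: count_add_pred => y /=; lia.
have below_k : k.-1 <= below k w.
  case: (leqP k 1) => k1; first lia.
  by rewrite /below (eq_count (a2 := fun y => y <= k.-1)) => [|y]; [apply: d_min | ]; lia.
by have := wsparse x xw d.+1; lia.
Qed.

Lemma max_unpacked_park_fixed w :
  0 \notin w -> sparse w -> dpos w = (size w).+1 -> max_unpacked w.
Proof.
move=> w0 wsparse d_end x xw; have [_ _ d_min] := dposP w; rewrite d_end in d_min.
have below_x : below x w = count (fun y => 0 < y < x) w.
  apply: eq_in_count => y yw /=.
  suff -> : 0 < y by []; by rewrite lt0n; apply: contraNneq w0 => <-.
have x_gt0 : 0 < x by rewrite lt0n; apply: contraNneq w0 => <-.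
have x_le : x <= size w.
  suff /allP : all (fun y => y <= size w) w by apply.
  by rewrite all_count eqn_leq count_size d_min //; case: (w) xw => //= *; lia.
have := wsparse x xw 1; rewrite /comp_rank below_x.
case: (eqVneq x 1) => [-> | /eqP x1]; first lia.
rewrite -below_x /below; have := d_min x.-1.
by rewrite (eq_count (a2 := fun y => y < x)) => [|y]; lia.
Qed.

Lemma max_unpacked_nonzero a : max_unpacked a -> 0 \notin a.
Proof. by move=> amax; apply/negP => /amax. Qed.

Lemma max_unpacked_below_ge a k x : max_unpacked a -> x \in a -> k <= x -> k.-1 <= below k a.
Proof.
move=> amax xa kx; have ex : exists z, (z \in a) && (k <= z) by exists x; rewrite xa kx.
case: (ex_minnP ex) => z /andP[za kz] z_min.
suff -> : below k a = below z a by have := amax z za; rewrite /comp_rank; lia.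
apply: eq_in_count => y ya /=; case: (ltnP y k) => yk; first lia.
by case: (ltnP y z) => // yz; have := z_min y; rewrite ya yk => /(_ isT); lia.
Qed.

Lemma max_unpacked_sparse a : max_unpacked a -> sparse a.
Proof.
move=> amax x xa k; case: (ltnP k x) => kx; last first.
  by rewrite (eq_count (a2 := pred0)) ?count_pred0 // => y /=; lia.
have split_x : below x a = below k a + count (fun y => k <= y < x) a.
  by apply: count_add_pred => y /=; lia.
by have := max_unpacked_below_ge amax xa (ltnW kx); have := amax x xa; rewrite /comp_rank; lia.
Qed.

Lemma max_unpacked_park_sub a s :
  max_unpacked a -> (forall P, count P s <= count P a) -> max_unpacked (park s).
Proof.
move=> amax sa.
have sub_sa : {subset s <= a}.
  by move=> x; rewrite -!has_pred1 !has_count => /leq_trans; apply.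
have s_inv : 0 \notin s /\ sparse s.
  split; first by apply: contra (max_unpacked_nonzero amax); apply: sub_sa.
  by move=> x xs k; apply: leq_trans (sa _) _; exact: max_unpacked_sparse (sub_sa x xs) k.
have [[p0 psparse] p_end] := @park_invariant (fun w => 0 \notin w /\ sparse w)
  (fun w '(conj w0 wsparse) _ => conj (nonzero_park_step w0) (sparse_park_step wsparse)) s s_inv.
exact: max_unpacked_park_fixed.
Qed.

Lemma max_unpacked_park_cat u v :
  max_unpacked (u ++ v) -> max_unpacked (park u) /\ max_unpacked (park v).
Proof.
by move=> uv; split; apply: max_unpacked_park_sub uv _ => P; rewrite count_cat ?leq_addr ?leq_addl.
Qed.

(** * Shuffles and packed words *)

Lemma shuffle_nil_r s : shuffle s [::] = [:: s].
Proof. by case: s. Qed.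

Lemma shuffle_cons x s y t : shuffle (x :: s) (y :: t) =
  map (cons x) (shuffle s (y :: t)) ++ map (cons y) (shuffle (x :: s) t).
Proof. by []. Qed.

Lemma perm_shuffle s t c : c \in shuffle s t -> perm_eq c (s ++ t).
Proof.
elim: s t c => [|x s IHs] t c; first by rewrite inE => /eqP ->.
elim: t c => [|y t IHt] c; first by rewrite shuffle_nil_r inE cats0 => /eqP ->.
rewrite shuffle_cons mem_cat => /orP[] /mapP [c' c'_in ->]; first by rewrite perm_cons IHs.
by rewrite perm_sym (perm_catCA (x :: s) [:: y] t) /= perm_cons perm_sym IHt.
Qed.

Lemma map_shuffle (f : nat -> nat) s t :
  map (map f) (shuffle s t) = shuffle (map f s) (map f t).
Proof.
elim: s t => [|x s IHs] t //; elim: t => [|y t IHt]; first by rewrite !shuffle_nil_r.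
have fxs : map f (x :: s) = f x :: map f s by [].
have fyt : map f (y :: t) = f y :: map f t by [].
by rewrite shuffle_cons map_cat fxs fyt shuffle_cons -fyt -IHs -fxs -IHt -!map_comp.
Qed.

Lemma filter_compl_nil (T : eqType) (a b : pred T) c t : b =1 predC a -> all b t ->
  (filter a c == [::]) && (filter b c == t) = (c == t).
Proof.
move=> bE tb; apply/andP/eqP => [[/eqP ca /eqP <-] | ->].
  apply: esym; apply/all_filterP/allP => x xc; rewrite bE /=; apply: contraT => /negbNE ax.
  have : x \in filter a c by rewrite mem_filter ax xc.
  by rewrite ca.
split; last exact/eqP/all_filterP.
rewrite (eq_in_filter (a2 := pred0)) ?filter_pred0 // => x /(allP tb).
by rewrite bE => /negbTE.
Qed.

Lemma count_cons_map x (L : seq (seq nat)) c :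
  count (pred1 c) (map (cons x) L) =
  if c is z :: c' then (x == z) * count (pred1 c') L else 0.
Proof.
rewrite count_map; case: c => [|z c]; first by rewrite (eq_count (a2 := pred0)) ?count_pred0.
case: (eqVneq x z) => [->|xz]; first by rewrite mul1n; apply: eq_count => l /=; rewrite eqseq_cons eqxx.
by rewrite mul0n (eq_count (a2 := pred0)) ?count_pred0 // => l /=; rewrite eqseq_cons (negbTE xz).
Qed.

Lemma count_shuffle N s t c : all (fun x => x <= N) s -> all (fun x => N < x) t ->
  count (pred1 c) (shuffle s t) =
  (filter (fun x => x <= N) c == s) && (filter (fun x => N < x) c == t).
Proof.
have gtE : (fun x => N < x) =1 predC (fun x => x <= N) by move=> x /=; rewrite ltnNge.
have leE : (fun x => x <= N) =1 predC (fun x => N < x) by move=> x /=; rewrite leqNgt.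
elim: s t c => [|x s IHs] t c s_le t_gt.
  by rewrite /= filter_compl_nil // addn0 eq_sym.
move: (s_le) => /andP[xN s_le']; elim: t c t_gt => [|y t IHt] c t_gt.
  by rewrite shuffle_nil_r /= andbC filter_compl_nil // addn0 eq_sym.
move: (t_gt) => /andP[Ny t_gt']; rewrite shuffle_cons count_cat !count_cons_map.
case: c => [//|z c]; rewrite IHs // IHt //=; case: (leqP z N) => zN /=.
  have -> : (y == z) = false by apply/negbTE/eqP; lia.
  by rewrite mul0n addn0 eqseq_cons [z == x]eq_sym; case: (x == z); rewrite ?mul1n.
have -> : (x == z) = false by apply/negbTE/eqP; lia.
by rewrite mul0n eqseq_cons [z == y]eq_sym; case: (y == z); rewrite ?mul1n ?andbF.
Qed.

Lemma max_unpacked_le_size a x : max_unpacked a -> x \in a -> x <= size a.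
Proof. by move=> amax xa; rewrite -(amax x xa); apply: below_lt_size. Qed.

Lemma max_unpacked_shuffle a b c : max_unpacked a -> max_unpacked b ->
  c \in shuffle a (map (addn (size a)) b) -> max_unpacked c.
Proof.
move=> amax bmax /perm_shuffle c_perm x xc.
have : x \in a ++ map (addn (size a)) b by rewrite -(perm_mem c_perm).
rewrite /comp_rank /below (permP c_perm) count_cat -/(below x a) mem_cat.
have a_lt_b y z : y \in a -> z \in b -> y < size a + z.
  by move=> ya zb; have := max_unpacked_le_size amax ya; have := bmax z zb; rewrite /comp_rank; lia.
case/orP=> [xa | /mapP [z zb ->]].
  rewrite (eq_in_count (a2 := pred0)) ?count_pred0 ?addn0; first exact: amax.
  by move=> _ /mapP [z zb ->] /=; apply/negbTE; rewrite -leqNgt ltnW // a_lt_b.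
rewrite count_map (eq_count (a2 := fun y => y < z)) => [|y /=]; last by rewrite ltn_add2l.
have -> : below (size a + z) a = size a.
  by rewrite /below (eq_in_count (a2 := predT)) ?count_predT // => y ya; rewrite /= a_lt_b.
by have := bmax z zb; rewrite /comp_rank /below; lia.
Qed.

Lemma below_iota x m r : below x (iota m r) = minn (x - m) r.
Proof.
elim: r m => [|r IHr] m /=; first by rewrite minn0.
by rewrite /below /= -/(below x _) IHr; case: (ltnP m x); lia.
Qed.

Lemma mem_tass w y : (y \in tass w) = (0 < y <= size (undup w)).
Proof.
rewrite tassE; apply/mapP/idP => [[x xw ->]|y_range].
  by rewrite /dense_rank ltnS below_lt_size // mem_undup.
have rank_inj : {in undup w &, injective (dense_rank w)}.
  by apply: mono_ltn_inj_in => x z; rewrite !mem_undup; apply: dense_rank_mono.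
have ranks_uniq : uniq (map (dense_rank w) (undup w)).
  by rewrite map_inj_in_uniq ?undup_uniq.
have ranks_sub : {subset map (dense_rank w) (undup w) <= iota 1 (size (undup w))}.
  by move=> _ /mapP [x xw ->]; rewrite mem_iota /dense_rank add1n !ltnS below_lt_size.
have [|_ ranksE] := uniq_min_size ranks_uniq ranks_sub; first by rewrite size_iota size_map.
have : y \in iota 1 (size (undup w)) by rewrite mem_iota; lia.
by rewrite -ranksE => /mapP [x xw ->]; exists x; rewrite // -mem_undup.
Qed.

Lemma packedP w : packed w -> forall y, (y \in w) = (0 < y <= size (undup w)).
Proof. by move=> /eqP wE y; rewrite -mem_tass wE. Qed.

Lemma packed_by_letters w r : (forall y, (y \in w) = (0 < y <= r)) ->
  packed w /\ size (undup w) = r.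
Proof.
move=> wE; have w_perm : perm_eq (undup w) (iota 1 r).
  by apply: uniq_perm; rewrite ?undup_uniq ?iota_uniq // => y; rewrite mem_undup wE mem_iota; lia.
split; last by rewrite (perm_size w_perm) size_iota.
rewrite /packed tassE; apply/eqP; rewrite -[RHS]map_id; apply/eq_in_map => x xw /=.
by rewrite /dense_rank /below (permP w_perm) -/(below x _) below_iota; have := wE x; rewrite xw; lia.
Qed.

Lemma size_undup_tass w : size (undup (tass w)) = size (undup w).
Proof. by have [] := packed_by_letters (mem_tass w). Qed.

Lemma mem_allwords n m w :
  (w \in allwords n m) = (size w == n) && all (fun x => 0 < x <= m) w.
Proof.
elim: n w => [|n IHn] w; first by case: w.
change (w \in [seq i :: v | i <- iota 1 m, v <- allwords n m] =
  (size w == n.+1) && all (fun x => 0 < x <= m) w).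
apply/allpairsP/idP => [[[i v] [/= im vn ->]]|].
  by move: vn im; rewrite IHn mem_iota /= eqSS => /andP[-> ->]; rewrite andbT; lia.
case: w => [|x w] //= /andP[wn /andP[xm wm]].
by exists (x, w); split => /=; [rewrite mem_iota; lia | rewrite IHn -eqSS wn wm | ].
Qed.

Lemma uniq_allwords n m : uniq (allwords n m).
Proof.
elim: n => [|n IHn] //; apply: allpairs_uniq => //; first exact: iota_uniq.
by move=> [? ?] [? ?] _ _ /= [-> ->].
Qed.

Lemma mem_packed_words n w : (w \in packed_words n) = packed w && (size w == n).
Proof.
rewrite /packed_words mem_filter mem_allwords; case wpacked: (packed w) => //=.
case: eqP => //= <-; apply/allP => x xw; have := packedP wpacked x; rewrite xw.
by move=> /esym /andP[-> /leq_trans]; apply; apply: size_undup.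
Qed.

Lemma uniq_packed_words n : uniq (packed_words n).
Proof. exact/filter_uniq/uniq_allwords. Qed.

Definition max_letter (w : seq nat) : nat := \max_(x <- w) x.

Lemma max_letter_packed w : packed w -> max_letter w <= size (undup w).
Proof.
by move=> wpacked; apply/bigmax_leqP_seq => x xw _; have := packedP wpacked x; rewrite xw; lia.
Qed.

Lemma packed_filter_le_size w u k : packed w -> packed u -> k <= max_letter w ->
  filter (fun x => x <= k) w = u -> k = size (undup u).
Proof.
move=> wpacked upacked k_le wu; have k_r := leq_trans k_le (max_letter_packed wpacked).
have memE y : (0 < y <= k) = (0 < y <= size (undup u)).
  by rewrite -(packedP upacked) -wu mem_filter (packedP wpacked); case: leqP; lia.
by apply/eqP; rewrite eqn_leq; have := memE k; have := memE (size (undup u)); lia.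
Qed.

Lemma tass_filter_gt w m : packed w -> m <= size (undup w) ->
  tass (filter (fun x => m < x) w) = map (subn^~ m) (filter (fun x => m < x) w).
Proof.
move=> wpacked m_r; set w' := filter _ w.
have memE y : (y \in w') = (m < y <= size (undup w)).
  by rewrite mem_filter (packedP wpacked); case: ltnP; lia.
have w'_perm : perm_eq (undup w') (iota m.+1 (size (undup w) - m)).
  by apply: uniq_perm; rewrite ?undup_uniq ?iota_uniq // => y; rewrite mem_undup memE mem_iota; lia.
rewrite tassE; apply/eq_in_map => y yw'.
by rewrite /dense_rank /below (permP w'_perm) -/(below y _) below_iota; have := memE y; rewrite yw'; lia.
Qed.

(* In [Delta M_w], the term [M_u (x) M_v] comes from at most one cut [k],
   namely [k = #letters of u]. *)
Lemma cut_exists_packed u v w : packed u -> packed v -> packed w ->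
  [exists k : 'I_(max_letter w).+1,
     (filter (fun x => x <= k) w == u) && (tass (filter (fun x => k < x) w) == v)]
  = (filter (fun x => x <= size (undup u)) w == u) &&
    (filter (fun x => size (undup u) < x) w == map (addn (size (undup u))) v).
Proof.
move=> upacked vpacked wpacked; set m := size (undup u).
apply/existsP/andP => [[k /andP[/eqP wk_le /eqP wk_gt]] | [/eqP wm_le /eqP wm_gt]].
  have km : k = m :> nat := packed_filter_le_size wpacked upacked (ltnSE (ltn_ord k)) wk_le.
  rewrite -km; split; first exact/eqP.
  have k_r := leq_trans (ltnSE (ltn_ord k)) (max_letter_packed wpacked).
  move: wk_gt; rewrite tass_filter_gt // => <-; rewrite -map_comp.
  by apply/eqP; rewrite -[LHS]map_id; apply/eq_in_map => y; rewrite mem_filter /=; lia.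
have m_lt : m < (max_letter w).+1.
  rewrite ltnS; case: (posnP m) => [-> // | m_gt0].
  have : m \in u by rewrite (packedP upacked); lia.
  by rewrite -wm_le mem_filter => /andP[_ mw]; exact: (@leq_bigmax_seq _ w xpredT id m mw).
exists (Ordinal m_lt); rewrite /= wm_le wm_gt eqxx /=.
by rewrite (order_iso_tass (order_iso_addn m v)) (eqP vpacked).
Qed.

Lemma packed_of_cut u v w : packed u -> packed v ->
  filter (fun x => x <= size (undup u)) w = u ->
  filter (fun x => size (undup u) < x) w = map (addn (size (undup u))) v ->
  packed w /\ size w = size u + size v.
Proof.
move=> upacked vpacked; set m := size (undup u) => w_le w_gt; split.
  apply: (proj1 (@packed_by_letters w (m + size (undup v)) _)) => y.
  have -> : (y \in w) = (y \in filter (fun x => x <= m) w) || (y \in filter (fun x => m < x) w).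
    by rewrite !mem_filter; case: (leqP y m); rewrite /= ?orbF.
  rewrite w_le w_gt (packedP upacked); apply/idP/idP.
    case/orP => [y_u | /mapP [z zv ->]]; first lia.
    by have := packedP vpacked z; rewrite zv => /esym; lia.
  move=> y_range; case: (leqP y m) => ym; first by rewrite /m; lia.
  apply/orP; right; apply/mapP; exists (y - m); last lia.
  by rewrite (packedP vpacked); lia.
rewrite -w_le -(size_map (addn m) v) -w_gt !size_filter -(count_predC (fun x => x <= m) w).
by congr addn; apply: eq_count => x /=; lia.
Qed.

Lemma map_tass_shuffle a b : max_unpacked a -> max_unpacked b ->
  map tass (shuffle a (map (addn (size a)) b)) =
  shuffle (tass a) (map (addn (size (undup a))) (tass b)).
Proof.
move=> amax bmax; set b' := map (addn (size a)) b.
have a_lt_b y z : y \in a -> z \in b -> y < size a + z.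
  by move=> ya zb; have := max_unpacked_le_size amax ya; have := bmax z zb; rewrite /comp_rank; lia.
have undup_ab : undup (a ++ b') = undup a ++ undup b'.
  rewrite undup_cat (eq_in_filter (a2 := predT)) ?filter_predT // => x.
  rewrite !mem_undup => xa /=; apply/mapP => -[z zb xz].
  by have := a_lt_b x z xa zb; rewrite -xz ltnn.
set r := dense_rank (a ++ b').
have -> : map tass (shuffle a b') = map (map r) (shuffle a b').
  apply/eq_in_map => c c_in /=; rewrite tassE; apply/eq_in_map => x xc.
  rewrite /dense_rank /r; congr S; apply/permP.
  by apply: uniq_perm; rewrite ?undup_uniq // => y; rewrite !mem_undup (perm_mem (perm_shuffle c_in)).
rewrite map_shuffle; congr shuffle.
  rewrite tassE; apply/eq_in_map => x xa; rewrite /r /dense_rank undup_ab /below count_cat.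
  rewrite (eq_in_count (a1 := fun y => y < x) (a2 := pred0) (s := undup b')) ?count_pred0 ?addn0 //.
  by move=> y; rewrite mem_undup => /mapP [z zb ->] /=; apply/negbTE; rewrite -leqNgt ltnW ?a_lt_b.
rewrite tassE /b' -!map_comp; apply/eq_in_map => z zb /=.
rewrite /r /dense_rank undup_ab /below count_cat.
rewrite (eq_in_count (a2 := predT) (s := undup a)) ?count_predT => [|y]; last first.
  by rewrite mem_undup => ya /=; rewrite a_lt_b.
rewrite -/(below _ _) -/(below _ _) below_undup_map ?addnS // => x y _ _.
by rewrite ltn_add2l.
Qed.

(** * Linear extensions and spans *)

Local Open Scope ring_scope.

Section FreeModules.
Variable K : fieldType.
Local Notation span := (@in_span K _).

Lemma sum_eq_count (I : eqType) (s : seq I) x :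
  \sum_(y <- s) (y == x)%:R = (count (pred1 x) s)%:R :> K.
Proof. by elim: s => [|y s IHs]; rewrite ?big_nil // big_cons IHs natrD. Qed.

Lemma sum_eq_scale (I : eqType) (V : lmodType K) (s : seq I) x (F : I -> V) :
  uniq s -> x \in s -> \sum_(y <- s) (y == x)%:R *: F y = F x.
Proof.
move=> s_uniq xs; rewrite (bigD1_seq x) //= eqxx scale1r big1 ?addr0 // => y /negbTE ->.
by rewrite scale0r.
Qed.

Lemma sum_mul_eq (I : eqType) (s : seq I) (c : I -> K) x :
  uniq s -> \sum_(y <- s) c y * (y == x)%:R = (x \in s)%:R * c x.
Proof.
move=> s_uniq; case: (boolP (x \in s)) => xs.
  rewrite mul1r (bigD1_seq x) //= eqxx mulr1 big1 ?addr0 // => y /negbTE ->.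
  by rewrite mulr0.
rewrite mul0r big_seq big1 // => y ys; case: eqP => [yx | _]; last by rewrite mulr0.
by rewrite -yx ys in xs.
Qed.

Lemma sum_unique_natr n (P : pred 'I_n) : {in P &, forall i j, i = j} ->
  \sum_(i < n) (P i)%:R = ([exists i, P i])%:R :> K.
Proof.
move=> P_uniq; case: existsP => [[i Pi]|nP].
  rewrite (bigD1 i) //= Pi big1 ?addr0 // => j ji; case Pj: (P j) => //.
  by rewrite (P_uniq _ _ Pi Pj) eqxx in ji.
by rewrite big1 // => i _; case Pi: (P i) => //; case: nP; exists i.
Qed.

Section Linear.
Variables I J : choiceType.
Implicit Types (f : I -> {malg K[J]}) (P : I -> Prop).

Lemma linEw f g (d : {fset I}) :
  (msupp g `<=` d)%fset -> lin f g = \sum_(x <- d) g@_x *: f x.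
Proof.
move=> g_d; apply: big_fset_incl => // x _ /mcoeff_outdom ->.
by rewrite scale0r.
Qed.

Lemma lin_is_linear f : linear (lin f).
Proof.
move=> a u v; set d := (msupp u `|` msupp v)%fset.
have uv_d : (msupp (a *: u + v) `<=` d)%fset.
  by apply: fsubset_trans (msuppD_le _ _) _; apply: fsetUSS => //; apply: msuppZ_le.
rewrite (linEw _ uv_d) (linEw _ (fsubsetUl _ _ : msupp u `<=` d)%fset).
rewrite (linEw _ (fsubsetUr _ _ : msupp v `<=` d)%fset) scaler_sumr -big_split /=.
by apply: eq_bigr => x _; rewrite mcoeffD mcoeffZ scalerDl scalerA.
Qed.

HB.instance Definition _ f :=
  GRing.isLinear.Build K {malg K[I]} {malg K[J]} *:%R (lin f) (lin_is_linear f).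

Lemma linU f a : lin f << a >> = f a.
Proof. by rewrite (@linEw _ _ [fset a]%fset) ?msuppU_le // big_seq_fset1 mcoeffUU scale1r. Qed.

Lemma lin_big (T : Type) f (s : seq T) (F : T -> {malg K[I]}) :
  lin f (\sum_(x <- s) F x) = \sum_(x <- s) lin f (F x).
Proof. exact: linear_sum. Qed.

Lemma linZ f a g : lin f (a *: g) = a *: lin f g.
Proof. exact: linearZZ. Qed.

Lemma lin_sum f (s : seq (K * I)) :
  lin f (\sum_(p <- s) p.1 *: << p.2 >>) = \sum_(p <- s) p.1 *: f p.2.
Proof. by rewrite lin_big; apply: eq_bigr => p _; rewrite linZ linU. Qed.

Lemma eq_lin f1 f2 : f1 =1 f2 -> lin f1 =1 lin f2.
Proof. by move=> f12 g; apply: eq_bigr => x _; rewrite f12. Qed.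

Lemma in_span0 P : span P (0 : {malg K[I]}).
Proof. by exists [::]; rewrite big_nil. Qed.

Lemma in_spanU P a : P a -> span P (<< a >> : {malg K[I]}).
Proof. by move=> Pa; exists [:: (1, a)]; rewrite big_seq1 scale1r; split=> // p /[!inE] /eqP ->. Qed.

Lemma in_spanD P g h : span P g -> span P h -> span P (g + h).
Proof.
move=> [s [Ps ->]] [t [Pt ->]]; exists (s ++ t); rewrite big_cat; split=> // p.
by rewrite mem_cat => /orP[/Ps|/Pt].
Qed.

Lemma in_spanZ P a g : span P g -> span P (a *: g).
Proof.
move=> [s [Ps ->]]; exists [seq (a * p.1, p.2) | p <- s]; split.
  by move=> _ /mapP [p ps ->]; exact: Ps ps.
by rewrite big_map scaler_sumr; apply: eq_bigr => p _; rewrite scalerA.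
Qed.

Lemma in_spanN P g : span P g -> span P (- g).
Proof. by rewrite -scaleN1r; apply: in_spanZ. Qed.

Lemma in_span_sum (T : eqType) P (s : seq T) (F : T -> {malg K[I]}) :
  (forall x, x \in s -> span P (F x)) -> span P (\sum_(x <- s) F x).
Proof.
elim: s => [|x s IHs] Fs; first by rewrite big_nil; apply: in_span0.
rewrite big_cons; apply: in_spanD; first by apply: Fs; rewrite mem_head.
by apply: IHs => y ys; apply: Fs; rewrite inE ys orbT.
Qed.

Lemma in_span_sub P Q (g : {malg K[I]}) :
  (forall a, P a -> Q a) -> span P g -> span Q g.
Proof. by move=> PQ [s [Ps gE]]; exists s; split=> // p /Ps /PQ. Qed.

End Linear.

Lemma lin_comp (I J L : choiceType) (f : J -> {malg K[L]}) (g : I -> {malg K[J]}) h :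
  lin f (lin g h) = lin (fun x => lin f (g x)) h.
Proof. by rewrite [lin g h]/lin lin_big; apply: eq_bigr => x _; rewrite linZ. Qed.

Lemma in_span_lin (I J : choiceType) (P : I -> Prop) (Q : J -> Prop) f g :
  span P g -> (forall a, P a -> span Q (f a)) -> span Q (lin f g).
Proof.
move=> [s [Ps ->]] fPQ; rewrite lin_sum; apply: in_span_sum => p ps.
by apply/in_spanZ/fPQ/Ps.
Qed.

Lemma bilinE (I J : choiceType) (f : I -> I -> {malg K[J]}) g h :
  bilin f g h = lin (fun x => lin (f x) h) g.
Proof. by apply: eq_bigr => x _; rewrite scaler_sumr; apply: eq_bigr => y _; rewrite scalerA. Qed.

Lemma bilinU (I J : choiceType) (f : I -> I -> {malg K[J]}) a b : bilin f << a >> << b >> = f a b.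
Proof. by rewrite bilinE !linU. Qed.

Lemma tmapE (I J : choiceType) (phi : {malg K[I]} -> {malg K[J]}) t :
  tmap phi t = lin (fun p => tens (phi << p.1 >>) (phi << p.2 >>)) t.
Proof. by []. Qed.

Lemma bilin_sum (I J : choiceType) (f : I -> I -> {malg K[J]}) (s t : seq (K * I)) :
  bilin f (\sum_(p <- s) p.1 *: << p.2 >>) (\sum_(q <- t) q.1 *: << q.2 >>) =
  \sum_(p <- s) \sum_(q <- t) (p.1 * q.1) *: f p.2 q.2.
Proof.
rewrite bilinE lin_sum; apply: eq_bigr => p _; rewrite lin_sum scaler_sumr.
by apply: eq_bigr => q _; rewrite scalerA.
Qed.

End FreeModules.

(** * The isomorphism F_a |-> N_(tass a) *)

Section DetassSubalgebra.
Variable K : fieldType.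
Local Notation span := (@in_span K _).
Local Notation Vmax := (span max_unpacked).

Definition tassN : {malg K[seq nat]} -> {malg K[seq nat]} :=
  lin (fun a : seq nat => << tass a >> : {malg K[seq nat]}).

HB.instance Definition _ :=
  GRing.isLinear.Build K {malg K[seq nat]} {malg K[seq nat]} *:%R tassN (lin_is_linear _).

Lemma tassNU a : tassN << a >> = << tass a >>.
Proof. exact: linU. Qed.

Lemma mulP_max_unpacked g h : Vmax g -> Vmax h -> Vmax (mulP g h).
Proof.
move=> [s [Ps ->]] [t [Pt ->]]; rewrite /mulP bilin_sum.
apply: in_span_sum => p ps; apply: in_span_sum => q qt; apply: in_spanZ.
by apply: in_span_sum => c c_in; apply/in_spanU/(max_unpacked_shuffle (Ps p ps) (Pt q qt)).
Qed.

Lemma DeltaP_max_unpacked g : Vmax g ->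
  span (fun p : seq nat * seq nat => max_unpacked p.1 /\ max_unpacked p.2) (DeltaP g).
Proof.
move=> Vg; apply: in_span_lin Vg _ => a amax; apply: in_span_sum => i _; apply: in_spanU.
by apply: max_unpacked_park_cat; rewrite cat_take_drop.
Qed.

Lemma antipP_max_unpacked g : Vmax g -> Vmax (antipP g).
Proof.
move=> Vg; apply: in_span_lin Vg _ => a; move: (size a).+1 => k.
elim: k a => [|k IHk] [|x a] amax /=.
- exact: in_span0.
- exact: in_span0.
- by apply: in_spanU => ?.
apply/in_spanN/in_span_sum => i _.
have := @max_unpacked_park_cat (take i (x :: a)) (drop i (x :: a)).
rewrite cat_take_drop => /(_ amax) [amax_take amax_drop].
by apply: mulP_max_unpacked; [apply: IHk | apply: in_spanU].
Qed.

Lemma tassN_packed g : Vmax g -> span packed (tassN g).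
Proof. by move=> Vg; apply: in_span_lin Vg _ => a _; apply/in_spanU/packed_tass. Qed.

Lemma max_unpackedP w : reflect (max_unpacked w) (unpack w == w).
Proof. by apply: (iffP eqP); rewrite max_unpackedE. Qed.

Lemma mcoeff_max_unpacked g a : Vmax g ->
  g@_a = (unpack a == a)%:R * (tassN g)@_(tass a).
Proof.
move=> [s [Ps ->]]; rewrite /tassN lin_sum !raddf_sum big_distrr /= !big_seq.
apply: eq_bigr => p ps; rewrite !mcoeffZ !mcoeffU mulrCA; congr (_ * _).
case: (max_unpackedP a) => [amax | anmax] /=; last first.
  by rewrite mul0r; case: eqP => // pa; rewrite -pa in anmax; case: anmax; apply: Ps.
rewrite mul1r; congr ((nat_of_bool _)%:R); apply/idP/idP => /eqP; first by move->.
by move/(max_unpacked_tass_inj (Ps p ps) amax) ->.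
Qed.

Lemma tassN_inj g h : Vmax g -> Vmax h -> tassN g = tassN h -> g = h.
Proof. by move=> Vg Vh gh; apply/malgP => a; rewrite (mcoeff_max_unpacked _ Vg) (mcoeff_max_unpacked _ Vh) gh. Qed.

Lemma tassN_surj x : span packed x -> exists2 g, Vmax g & tassN g = x.
Proof.
move=> [s [Ps ->]]; exists (\sum_(p <- s) p.1 *: << unpack p.2 >>).
  by apply: in_span_sum => p ps; apply/in_spanZ/in_spanU/max_unpacked_unpack.
rewrite linear_sum; apply: eq_big_seq => p ps.
by rewrite linearZ /= tassNU (order_iso_tass (order_iso_unpack_self p.2)) (eqP (Ps p ps)).
Qed.

Lemma dM_cut u v w : packed u -> packed w ->
  dM K u v w = [exists k : 'I_(max_letter w).+1,
     (filter (fun x => (x <= k)%N) w == u) && (tass (filter (fun x => (k < x)%N) w) == v)]%:R.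
Proof.
move=> upacked wpacked; rewrite /dM /DeltaM raddf_sum /=.
under eq_bigr do rewrite mcoeffU xpair_eqE.
apply: sum_unique_natr => i j /andP[/eqP wi _] /andP[/eqP wj _]; apply/val_inj.
rewrite /= (packed_filter_le_size wpacked upacked (ltnSE (ltn_ord i)) wi).
by rewrite (packed_filter_le_size wpacked upacked (ltnSE (ltn_ord j)) wj).
Qed.

Lemma shuffle_packed_dual u v : packed u -> packed v ->
  \sum_(c <- shuffle u (map (addn (size (undup u))) v)) << c >> =
  \sum_(w <- packed_words (size u + size v)) dM K u v w *: << w >>.
Proof.
move=> upacked vpacked; set m := size (undup u).
apply/malgP => w; rewrite !raddf_sum /=.
under eq_bigr do rewrite mcoeffU.
under [RHS]eq_bigr do rewrite mcoeffZ mcoeffU.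
rewrite sum_eq_count sum_mul_eq ?uniq_packed_words // (count_shuffle (N := m)); first last.
- by apply/allP => _ /mapP [z zv ->]; have := packedP vpacked z; rewrite zv => /esym; lia.
- by apply/allP => x xu; have := packedP upacked x; rewrite xu => /esym /andP[].
case cut: (_ && _).
  move: cut => /andP[/eqP w_le /eqP w_gt].
  have [wpacked wsize] := packed_of_cut upacked vpacked w_le w_gt.
  rewrite mem_packed_words wpacked wsize eqxx /= mul1r dM_cut // cut_exists_packed //.
  by rewrite /m w_le w_gt !eqxx.
case: (boolP (w \in packed_words _)) => w_in; last by rewrite mul0r.
move: (w_in); rewrite mem_packed_words => /andP[wpacked _].
by rewrite dM_cut // cut_exists_packed // -/m cut mulr0.
Qed.

Lemma tassN_sum (s : seq (K * seq nat)) :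
  tassN (\sum_(p <- s) p.1 *: << p.2 >>) =
  \sum_(p <- map (fun p => (p.1, tass p.2)) s) p.1 *: << p.2 >>.
Proof. by rewrite big_map /tassN lin_sum. Qed.

Lemma tassN_mulP g h : Vmax g -> Vmax h -> tassN (mulP g h) = mulN (tassN g) (tassN h).
Proof.
move=> [s [Ps ->]] [t [Pt ->]].
rewrite !tassN_sum /mulP /mulN !bilin_sum !big_map /tassN lin_big big_seq [RHS]big_seq.
apply: eq_bigr => p ps; rewrite lin_big big_map big_seq [RHS]big_seq.
apply: eq_bigr => q qt /=; rewrite linZ lin_big (eq_bigr (fun c => << tass c >>)) => [|c _]; last exact: linU.
rewrite -(big_map tass xpredT (fun c => << c >>)) (map_tass_shuffle (Ps p ps) (Pt q qt)).
by rewrite -size_undup_tass shuffle_packed_dual ?packed_tass.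
Qed.

Lemma cM_cut u v w i : (i <= size w)%N -> size u = i ->
  cM K u v w = ((tass (take i w) == u) && (tass (drop i w) == v))%:R.
Proof.
move=> i_le u_size; rewrite /cM /sprod /Mser.
rewrite (bigD1 (Ordinal (i_le : (i < (size w).+1)%N))) //= big1 ?addr0 -?natrM ?mulnb //.
move=> j ji; suff -> : (tass (take j w) == u) = false by rewrite mul0r.
apply/negbTE/eqP => wj; move: ji; rewrite -val_eqE /= -u_size -wj tassE size_map.
by rewrite size_takel ?eqxx // -ltnS ltn_ord.
Qed.

Lemma size_tass w : size (tass w) = size w.
Proof. by rewrite tassE size_map. Qed.

Lemma tassN_DeltaPU a : tmap tassN (DeltaP << a >>) = DeltaN (tassN << a >>).
Proof.
rewrite /DeltaP /DeltaN tassNU !linU tmapE size_tass lin_big; apply: eq_bigr => i _.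
rewrite linU /= !tassNU !tass_park /tens bilinU.
have i_le : (i <= size a)%N by rewrite -ltnS ltn_ord.
set U := tass (take i a); set V := tass (drop i a).
have take_tass : tass (take i (tass a)) = U.
  exact/order_iso_tass/order_iso_take/order_iso_tass_self.
have drop_tass : tass (drop i (tass a)) = V.
  exact/order_iso_tass/order_iso_drop/order_iso_tass_self.
rewrite (eq_big_seq (fun u => (u == U)%:R *:
    \sum_(v <- packed_words (size a - i)) (v == V)%:R *: << (u, v) >>)); last first.
  move=> u u_in; rewrite scaler_sumr; apply: eq_big_seq => v v_in.
  move: u_in; rewrite mem_packed_words => /andP[_ /eqP u_size].
  rewrite (cM_cut v _ u_size) ?size_tass // take_tass drop_tass scalerA -natrM mulnb.
  by rewrite [U == u]eq_sym [V == v]eq_sym.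
rewrite sum_eq_scale ?uniq_packed_words ?sum_eq_scale ?uniq_packed_words //.
  by rewrite mem_packed_words packed_tass /V size_tass size_drop eqxx.
by rewrite mem_packed_words packed_tass /U size_tass size_takel ?eqxx.
Qed.

Lemma tassN_DeltaP g : tmap tassN (DeltaP g) = DeltaN (tassN g).
Proof.
rewrite tmapE /DeltaP /DeltaN [tassN g]/tassN !lin_comp; apply: eq_lin => a.
by have := tassN_DeltaPU a; rewrite tmapE /DeltaP /DeltaN tassNU !linU; apply.
Qed.

Lemma epsN_tassN g : Vmax g -> epsN (tassN g) = epsP g.
Proof. by move=> Vg; rewrite /epsN /epsP (mcoeff_max_unpacked _ Vg) mul1r. Qed.

End DetassSubalgebra.

Theorem proposition3p5 (K : fieldType) (charK0 : [pchar K] =i pred0) :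
  let V := @in_span K _ is_detass in
  let V2 := @in_span K _ (fun p : seq nat * seq nat => is_detass p.1 /\ is_detass p.2) in
  let NC := @in_span K _ (fun u => packed u) in
  (* the span V of the F_{detass(u)} is a Hopf subalgebra of PQSym *)
  (V (unitP K)
   /\ (forall g h, V g -> V h -> V (mulP g h))
   /\ (forall g, V g -> V2 (DeltaP g))
   /\ (forall g, V g -> V (antipP g)))
  /\
  (* V is isomorphic (as a bialgebra, hence as a Hopf algebra) to NCQSym^* *)
  (exists phi : {linear {malg K[seq nat]} -> {malg K[seq nat]}},
     (forall g, V g -> NC (phi g))
     /\ (forall g h, V g -> V h -> phi g = phi h -> g = h)
     /\ (forall x, NC x -> exists2 g, V g & phi g = x)
     /\ phi (unitP K) = unitN K
     /\ (forall g h, V g -> V h -> phi (mulP g h) = mulN (phi g) (phi h))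
     /\ (forall g, V g -> epsN (phi g) = epsP g)
     /\ (forall g, V g -> tmap phi (DeltaP g) = DeltaN (phi g))).
Proof.
move=> V V2 NC.
have VE g : V g <-> in_span max_unpacked g.
  by split; apply: in_span_sub => a /detassP.
split.
  split; [|split; [|split]].
  - by apply/VE/in_spanU => ?.
  - by move=> g h /VE Vg /VE Vh; apply/VE/mulP_max_unpacked.
  - move=> g /VE /DeltaP_max_unpacked; apply: in_span_sub => p [p1 p2].
    by split; apply/detassP.
  - by move=> g /VE Vg; apply/VE/antipP_max_unpacked.
exists (@tassN K); split; [|split; [|split; [|split; [|split; [|split]]]]].
- by move=> g /VE /tassN_packed.
- by move=> g h /VE Vg /VE Vh; apply: tassN_inj.
- by move=> x /tassN_surj [g Vg gx]; exists g => //; apply/VE.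
- exact: tassNU.
- by move=> g h /VE Vg /VE Vh; apply: tassN_mulP.
- by move=> g /VE /epsN_tassN.
- by move=> g _; apply: tassN_DeltaP.
Qed.
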